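(* Let $H$ be a $k$-gate. If $H$ is an induced subgraph of a graph $G$, then $H$ is an induced subgraph of some atom of $G$.
   Context: All graphs are finite and simple. A clique is a maximal complete set of vertices. A clique $C$ of a connected graph $H$ is a separator if $H-C$ (the subgraph induced by $V(H)\setminus C$) is disconnected; an atom is a connected graph with no clique separator. The atoms of a graph $G$ are the graphs obtained by the decomposition of $G$ by clique separators: $G$ is progressively decomposed along clique separators into a clique decomposition tree whose leaves correspond to atoms; equivalently, the atoms of $G$ are the maximal connected induced subgraphs of $G$ having no clique separator. Gates are defined recursively: (i) every chordless cycle $C_n$ with $n\geq 4$ is a gate; (ii) if $H'$ is a gate, $C$ and $C'$ are disjoint cliques of $H'$, and $P=(v_1,\dots,v_l)$ with $l\geq 2$ is a chordless path vertex-disjoint from $H'$, then the union of $H'$ and $P$ together with all edges between $v_1$ and the vertices of $C$ and all edges between $v_l$ and the vertices of $C'$ is a gate; (iii) there are no other gates. A $k$-gate is a gate with exactly $k$ cliques. *)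

(* A graph is a symmetric irreflexive relation e on a finType T;
   subgraphs are represented by vertex sets S : {set T} (induced subgraph G[S]). *)
From mathcomp Require Import all_boot.
Set Implicit Arguments. Unset Strict Implicit. Unset Printing Implicit Defensive.

Section Graphs.
Variables (T : finType) (e : rel T).

Definition simple_graph := irreflexive e /\ symmetric e.

Definition induced_rel (S : {set T}) : rel T :=
  [rel x y | [&& x \in S, y \in S & e x y]].

Definition connected_set (S : {set T}) : Prop :=
  forall x y, x \in S -> y \in S -> connect (induced_rel S) x y.

Definition complete_set (A : {set T}) : bool :=
  [forall x in A, forall y in A, (x != y) ==> e x y].

Definition clique_in (S C : {set T}) : bool :=
  [&& C \subset S, complete_set C &
      [forall x in S :\: C, exists y in C, ~~ e x y]].

Definition clique_separator (S C : {set T}) : Prop :=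
  clique_in S C /\ ~ connected_set (S :\: C).

Definition is_atom (A : {set T}) : Prop :=
  [/\ A != set0, connected_set A, (forall C, ~ clique_separator A C) &
      forall B : {set T}, A \subset B -> B != set0 -> connected_set B ->
        (forall C, ~ clique_separator B C) -> B = A].

Definition chordless_cycle (S : {set T}) : Prop :=
  exists s : seq T, [/\ uniq s, S = [set x in s], 4 <= size s &
    {in S &, forall x y, e x y =
       (index y s == (index x s).+1 %% size s) ||
       (index x s == (index y s).+1 %% size s)}].

Definition chordless_path (s : seq T) : Prop :=
  [/\ uniq s, 2 <= size s &
    {in s &, forall x y, e x y =
       (index y s == (index x s).+1) || (index x s == (index y s).+1)}].

Inductive gate : {set T} -> Prop :=
| gate_cycle S : chordless_cycle S -> gate S
| gate_ext S C C' (s : seq T) :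
    gate S -> clique_in S C -> clique_in S C' -> [disjoint C & C'] ->
    chordless_path s -> [disjoint [set x in s] & S] ->
    (forall p x, p \in s -> x \in S ->
       e p x = ((p == head p s) && (x \in C)) || ((p == last p s) && (x \in C'))) ->
    gate (S :|: [set x in s]).

Definition num_cliques (S : {set T}) : nat :=
  #|[set C : {set T} | clique_in S C]|.

End Graphs.

(* A gate [S] stays connected after deleting any complete set [K] of vertices;
   for [K] empty or a clique this says that [G[S]] is connected and has no
   clique separator, and a maximal superset of [S] with that property is an
   atom.  A chordless cycle [C_n], [n >= 4], has no triangle, so [K] removes at
   most two consecutive vertices and leaves a path.  When a chordless path [P]
   is attached to disjoint cliques [C], [C'] of a gate [S], the graph [S \ K] is
   connected by induction, and every remaining vertex of [P] reaches it along
   [P]: [K] meets [P] in at most two consecutive vertices, and a vertex of [K]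
   on [P] is adjacent to a vertex of [K] in [C] (resp. [C']) only if it is the
   first (resp. last) vertex of [P]; maximality of the clique [C] rules out
   [C \subset K] together with a vertex of [C'] in [K]. *)

From mathcomp Require Import all_boot zify.
From Stdlib Require Import ClassicalEpsilon.
Set Implicit Arguments. Unset Strict Implicit. Unset Printing Implicit Defensive.

Section Graph.
Variables (T : finType) (e : rel T).

Definition no_complete_cutset (S : {set T}) : Prop :=
  forall K, complete_set e K -> connected_set e (S :\: K).

Definition induces_atom (A : {set T}) : Prop :=
  [/\ A != set0, connected_set e A & forall C, ~ clique_separator e A C].

Lemma complete_adj K x y : complete_set e K -> x \in K -> y \in K -> x != y -> e x y.
Proof. by move=> /forall_inP/(_ x) cK xK yK; move/forall_inP: (cK xK) => /(_ y yK) /implyP. Qed.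

Lemma clique_maximal S C x : clique_in e S C -> x \in S -> x \notin C ->
  exists2 y, y \in C & ~~ e x y.
Proof.
case/and3P=> _ _ /forall_inP/(_ x) maxC xS xC.
have /maxC/exists_inP[y] : x \in S :\: C by rewrite inE xC xS.
by exists y.
Qed.

Lemma clique_in_neq0 S C : S != set0 -> clique_in e S C -> C != set0.
Proof.
case/set0Pn=> x xS cC; apply/set0Pn.
case: (boolP (x \in C)) => [|xC]; first by exists x.
by have [y yC _] := clique_maximal cC xS xC; exists y.
Qed.

Lemma connect_walk (X : {set T}) (f : nat -> T) a b : a <= b ->
  (forall m, a <= m < b -> e (f m) (f m.+1)) ->
  (forall m, a <= m <= b -> f m \in X) ->
  connect (induced_rel e X) (f a) (f b).
Proof.
elim: b => [|b IHb] ab f_adj f_in; first by have -> : a = 0 by lia.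
have [ba|ab'] := ltnP b a; first by have -> : a = b.+1 by lia.
apply: connect_trans (IHb ab' _ _) (connect1 _) => [m hm|m hm|].
- by apply: f_adj; lia.
- by apply: f_in; lia.
by rewrite /induced_rel /= f_adj ?f_in //; lia.
Qed.

Lemma no_complete_cutset_atom S : S != set0 -> no_complete_cutset S -> induces_atom S.
Proof.
move=> S_neq0 S_cut; split=> // [|C [/and3P[_ cC _] []]]; last exact: S_cut.
by rewrite -[S]setD0; apply: S_cut; apply/forall_inP=> x; rewrite inE.
Qed.

Lemma atom_superset S : induces_atom S -> exists A, is_atom e A /\ S \subset A.
Proof.
pose atomb B : bool := excluded_middle_informative (induces_atom B).
have atombP B : reflect (induces_atom B) (atomb B) := sumboolP _.
move=> /atombP atomS; have [A /maxsetP[/atombP[nA cA sA] maxA] sSA] := maxset_exists atomS.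
by exists A; split=> //; split=> // B sAB nB cB sB; apply: maxA sAB; apply/atombP.
Qed.

Hypothesis e_sym : symmetric e.

Lemma connect_induced_sym X : connect_sym (induced_rel e X).
Proof.
by apply: sym_connect_sym => x y; rewrite /induced_rel /= e_sym andbCA !andbA.
Qed.

Lemma connected_set_walk (X : {set T}) (f : nat -> T) a b :
  (forall m, a <= m < b -> e (f m) (f m.+1)) ->
  (forall m, a <= m <= b -> f m \in X) ->
  (forall x, x \in X -> exists2 m, a <= m <= b & x = f m) ->
  connected_set e X.
Proof.
move=> f_adj f_in cover x y /cover[p hp ->] /cover[q hq ->].
wlog pq : p q hp hq / p <= q => [hwlog|].
  by have [|/ltnW qp] := leqP p q; [|rewrite connect_induced_sym]; apply: hwlog.
apply: connect_walk => // [m hm|m hm]; [apply: f_adj | apply: f_in]; lia.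
Qed.

Lemma connected_set_via (X Y : {set T}) : Y \subset X -> connected_set e Y ->
  (forall x, x \in X -> exists2 y, y \in Y & connect (induced_rel e X) x y) ->
  connected_set e X.
Proof.
move=> sYX cY reachY x z /reachY[x' x'Y xx'] /reachY[z' z'Y zz'].
apply: connect_trans xx' _; rewrite connect_induced_sym in zz'.
apply: connect_trans zz'; apply: connect_sub (cY _ _ x'Y z'Y) => u w /and3P[uY wY uw].
by apply: connect1; rewrite /induced_rel /= !(subsetP sYX) ?uw.
Qed.

Section ChordlessCycle.
Variables (s : seq T) (x0 : T).
Hypotheses (s_uniq : uniq s) (s_size : 4 <= size s).
Hypothesis s_adj : {in [set x in s] &, forall x y, e x y =
  (index y s == (index x s).+1 %% size s) || (index x s == (index y s).+1 %% size s)}.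

Local Notation n := (size s).
Let v m := nth x0 s (m %% n).

Let n_gt0 : 0 < n. Proof. by apply: leq_trans s_size. Qed.

Let cyc_mem m : v m \in s.
Proof. by rewrite mem_nth ?ltn_pmod. Qed.

Let cyc_index m : index (v m) s = m %% n.
Proof. by rewrite index_uniq ?ltn_pmod. Qed.

Let cyc_addn m : v (m + n) = v m.
Proof. by rewrite /v modnDr. Qed.

Let cyc_rot x j : x \in s -> exists2 r, r < n & x = v (j + r).
Proof.
move=> xs; set i := index x s; exists ((i + (n - j %% n)) %% n); first by rewrite ltn_pmod.
have jn := ltn_pmod j n_gt0.
rewrite /v modnDmr.
have -> : j + (i + (n - j %% n)) = (j %/ n).+1 * n + i by rewrite {1}(divn_eq j n); lia.
by rewrite modnMDl modn_small ?index_mem ?nth_index.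
Qed.

Let cyc_adj p r : r < n -> e (v p) (v (p + r)) = (r == 1) || (r == n.-1).
Proof.
move=> rn; rewrite s_adj ?inE ?cyc_mem // !cyc_index.
rewrite -addn1 modnDml -[(_ %% n).+1]addn1 modnDml -addnA addn1 -[p.+1]addn1.
rewrite -[X in _ || (X == _ %[mod n])]addn0 !eqn_modDl (modn_small rn) mod0n.
rewrite (@modn_small 1) ?addn1; last lia.
have [lt|eq] : r.+1 < n \/ r.+1 = n by lia.
- by rewrite modn_small //; lia.
- by rewrite eq modnn; lia.
Qed.

Let cyc_neq p r : 0 < r < n -> v (p + r) != v p.
Proof.
move=> hr; apply/eqP => /(congr1 (index^~ s)); rewrite !cyc_index => /eqP.
by rewrite -{2}(addn0 p) eqn_modDl mod0n modn_small; lia.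
Qed.

Let cyc_complete_nbr K p r : complete_set e K -> v p \in K -> v (p + r) \in K ->
  0 < r < n -> (r == 1) || (r == n.-1).
Proof.
move=> cK pK prK hr; rewrite -(cyc_adj p); last lia.
by rewrite (complete_adj cK) // eq_sym cyc_neq.
Qed.

(* As [C_n] has no triangle for [n >= 4], a complete set meets it in at most two
   consecutive vertices [v j], [v (j + 1)]. *)
Let cyc_complete_arc K : complete_set e K ->
  exists j d, d <= 2 /\ forall r, r < n -> (v (j + r) \in K) = (r < d).
Proof.
move=> cK; case: (pickP [pred x | (x \in K) && (x \in s)]) => [a /andP[aK a_s]|noK];
  last by exists 0, 0; split=> // r _; have := noK (v r); rewrite /= cyc_mem andbT.
have [p _ ap] := cyc_rot 0 a_s; rewrite ap add0n {a ap a_s} in aK.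
have [j [jK jpredK]] : exists j, v j \in K /\ v (j + n.-1) \notin K.
  case: (boolP (v (p + n.-1) \in K)) => [ppK|]; last by exists p.
  exists (p + n.-1); split=> //; apply/negP => ppK'.
  have E : v (p + n.-1 + n.-1) = v (p + (n - 2)) by rewrite -[in RHS]cyc_addn; congr v; lia.
  by rewrite E in ppK'; have := cyc_complete_nbr cK aK ppK'; lia.
exists j, (if v (j + 1) \in K then 2 else 1); split; first by case: ifP.
move=> r rn; case: (ltngtP r 1) => [r0|r2|->]; last by case: ifP.
  by move: r0; rewrite ltnS leqn0 => /eqP ->; rewrite addn0 jK; case: ifP.
have rK : v (j + r) \notin K.
  apply/negP => rK; have /orP[/eqP r1|/eqP rn1] : (r == 1) || (r == n.-1).
    by apply: cyc_complete_nbr cK jK rK _; lia.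
  - by move: r2; rewrite r1.
  - by rewrite -rn1 rK in jpredK.
by rewrite (negbTE rK); case: ifP => _; rewrite ltnNge ?r2 ?(ltnW r2).
Qed.

Lemma chordless_cycle_no_complete_cutset : no_complete_cutset [set x in s].
Proof.
move=> K /cyc_complete_arc[j [d [d2 arcK]]].
apply: (@connected_set_walk _ (fun m => v (j + m)) d n.-1) => [m hm|m hm|x].
- by rewrite -addn1 addnA cyc_adj; lia.
- by rewrite !inE cyc_mem arcK; lia.
rewrite !inE => /andP[xK /(cyc_rot j)[r rn xr]]; exists r => //.
by move: xK; rewrite xr arcK //; lia.
Qed.

End ChordlessCycle.

Section PathAttachment.
Variables (S C C' : {set T}) (s : seq T) (x0 : T).
Hypotheses (S_neq0 : S != set0) (S_cut : no_complete_cutset S).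
Hypotheses (C_clique : clique_in e S C) (C'_clique : clique_in e S C').
Hypotheses (C_C'_disj : [disjoint C & C']) (s_path : chordless_path e s).
Hypothesis s_S_disj : [disjoint [set x in s] & S].
Hypothesis s_attach : forall p x, p \in s -> x \in S ->
  e p x = ((p == head p s) && (x \in C)) || ((p == last p s) && (x \in C')).

Local Notation n := (size s).
Let p m := nth x0 s m.
Let X K := (S :|: [set x in s]) :\: K.

Let C_sub : {subset C <= S}. Proof. by case/and3P: C_clique => /subsetP. Qed.
Let C'_sub : {subset C' <= S}. Proof. by case/and3P: C'_clique => /subsetP. Qed.

Let s_uniq : uniq s. Proof. by case: s_path. Qed.
Let n_gt0 : 0 < n. Proof. by case: s_path => _ /ltnW. Qed.

Let path_mem m : m < n -> p m \in s.
Proof. exact: mem_nth. Qed.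

Let path_notin m : m < n -> p m \in S = false.
Proof. by move=> mn; rewrite (disjointFr s_S_disj) // inE path_mem. Qed.

Let path_adj m1 m2 : m1 < n -> m2 < n -> e (p m1) (p m2) = (m2 == m1.+1) || (m1 == m2.+1).
Proof. by case: s_path => _ _ adj m1n m2n; rewrite adj ?path_mem // !index_uniq. Qed.

Let path_attach m x : m < n -> x \in S ->
  e (p m) x = ((m == 0) && (x \in C)) || ((m == n.-1) && (x \in C')).
Proof.
move=> mn xS; rewrite s_attach ?path_mem // -nth0 -nth_last.
by rewrite !(set_nth_default x0) ?prednK // !nth_uniq ?prednK.
Qed.

Let complete_path_gap (K : {set T}) m1 m2 : complete_set e K -> m1.+1 < m2 < n ->
  p m1 \in K -> p m2 \notin K.
Proof.
move=> cK /andP[m12 m2n] m1K; apply/negP => m2K.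
have m1n : m1 < n := ltn_trans (ltnW m12) m2n.
have : e (p m1) (p m2) by rewrite (complete_adj cK) // nth_uniq // ltn_eqF // ltnW.
by rewrite path_adj // (gtn_eqF m12) (@ltn_eqF m1 m2.+1) // ltnW // ltnW.
Qed.

Let complete_attach (K : {set T}) m y : complete_set e K -> m < n -> y \in S ->
  p m \in K -> y \in K -> ((m == 0) && (y \in C)) || ((m == n.-1) && (y \in C')).
Proof.
move=> cK mn yS mK yK; rewrite -path_attach // (complete_adj cK) //.
by apply: contraFneq (path_notin mn) => ->.
Qed.

Let route_back (K : {set T}) i c : i < n -> c \in C -> c \notin K ->
  (forall m, m <= i -> p m \notin K) -> connect (induced_rel e (X K)) c (p i).
Proof.
move=> iN cC cK before; have cS := C_sub cC.
apply: (connect_walk (f := fun m => if m is m'.+1 then p m' else c) (a := 0) (b := i.+1))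
  => // [[|m]|[|m]] /= hm.
- by rewrite e_sym path_attach ?eqxx ?cC.
- have m1n : m.+1 < n := leq_ltn_trans (hm : m < i) iN.
  by rewrite path_adj ?eqxx ?(ltnW m1n).
- by rewrite !inE cS cK.
- by rewrite !inE path_mem ?before ?orbT // (leq_ltn_trans (hm : m <= i) iN).
Qed.

Let route_fwd (K : {set T}) i c : i < n -> c \in C' -> c \notin K ->
  (forall m, i <= m < n -> p m \notin K) -> connect (induced_rel e (X K)) (p i) c.
Proof.
move=> iN cC cK after; have cS := C'_sub cC.
have := connect_walk (X := X K) (f := fun m => if m < n then p m else c) (a := i) (b := n).
rewrite iN ltnn; apply=> [|m /andP[im mn]|m hm]; first exact: ltnW.
- rewrite mn; case: ltnP => [m1n|nm1]; first by rewrite path_adj ?eqxx.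
  have m_last : m == n.-1 by rewrite -eqSS prednK // eqn_leq mn nm1.
  by rewrite path_attach // m_last cC orbT.
- case: ltnP => mn; last by rewrite !inE cS cK.
  by rewrite !inE path_mem ?after ?orbT // mn andbT; case/andP: hm.
Qed.

Lemma path_attachment_no_complete_cutset : no_complete_cutset (S :|: [set x in s]).
Proof.
move=> K cK.
have [c0 c0C] := set0Pn _ (clique_in_neq0 S_neq0 C_clique).
have [c1 c1C'] := set0Pn _ (clique_in_neq0 S_neq0 C'_clique).
have c0C' : c0 \in C' = false := disjointFr C_C'_disj c0C.
have c1C : c1 \in C = false := disjointFl C_C'_disj c1C'.
apply: (connected_set_via (Y := S :\: K)) (S_cut cK) _ => [|x].
  by apply/subsetP => y; rewrite !inE => /andP[-> ->].
rewrite !inE => /andP[xK /orP[xS|xs]]; first by exists x; rewrite // inE xK.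
have [i iN xi] : exists2 i, i < n & x = p i.
  by exists (index x s); rewrite ?index_mem // /p nth_index.
rewrite {x xs}xi in xK *.
have fwd : c1 \notin K -> (forall m, i < m < n -> p m \notin K) ->
    exists2 y, y \in S :\: K & connect (induced_rel e (X K)) (p i) y.
  move=> c1K after; exists c1; first by rewrite inE c1K C'_sub.
  apply: route_fwd => // m /andP[]; rewrite leq_eqVlt => /orP[/eqP <- //|im mn].
  by apply: after; rewrite im.
case: (boolP [exists m : 'I_i, p m \in K]) => [/existsP[[m /= mi] mK]|noK].
  apply: fwd => [|m' /andP[im' m'n]].
  - apply/negP => c1K.
    have := complete_attach cK (ltn_trans mi iN) (C'_sub c1C') mK c1K.
    rewrite c1C c1C' andbF andbT /= => /eqP m_last.
    by move: (leq_ltn_trans mi iN); rewrite m_last prednK // ltnn.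
  - by apply: complete_path_gap cK _ mK; rewrite (leq_ltn_trans mi im').
have before m : m <= i -> p m \notin K.
  rewrite leq_eqVlt => /orP[/eqP -> // | mi]; apply/negP => mK.
  by move/negP: noK; apply; apply/existsP; exists (Ordinal mi).
case: (boolP [exists c in C, c \notin K]) => [/exists_inP[c cC cK']|/exists_inPn CK].
  exists c; first by rewrite inE cK' C_sub.
  by rewrite connect_induced_sym; apply: route_back.
apply: fwd => [|m /andP[im mn]].
- apply/negP => c1K.
  have [y yC /negP] := clique_maximal C_clique (C'_sub c1C') (negbT c1C); apply.
  apply: complete_adj cK c1K (negbNE (CK y yC)) _.
  by apply: contraFneq c1C => ->.
- apply/negP => mK.
  have := complete_attach cK mn (C_sub c0C) mK (negbNE (CK c0 c0C)).
  by rewrite c0C c0C' andbF orbF andbT => /eqP m0; rewrite m0 in im.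
Qed.

End PathAttachment.

Lemma gate_neq0 S : gate e S -> S != set0.
Proof.
elim=> [{}S [s [_ -> s4 _]] | {}S C C' s _ /set0Pn[x xS] *]; apply/set0Pn.
  by case: s s4 => // x s _; exists x; rewrite inE mem_head.
by exists x; rewrite inE xS.
Qed.

Lemma gate_no_complete_cutset S : gate e S -> no_complete_cutset S.
Proof.
elim=> [{}S [s [s_uniq -> s4 s_adj]] | {}S C C' s gS S_cut C_clique C'_clique].
  have x0 : T by case: s {s_uniq s_adj} s4 => [|x] //.
  exact: chordless_cycle_no_complete_cutset x0 s_uniq s4 s_adj.
have [x0 _] := set0Pn _ (gate_neq0 gS).
exact: path_attachment_no_complete_cutset x0 (gate_neq0 gS) S_cut C_clique C'_clique.
Qed.

End Graph.

Theorem lemma12 (T : finType) (e : rel T) (k : nat) (S : {set T}) :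
  simple_graph e -> gate e S -> num_cliques e S = k ->
  exists A : {set T}, is_atom e A /\ S \subset A.
Proof.
move=> [_ e_sym] gS _; apply/atom_superset/no_complete_cutset_atom.
- exact: gate_neq0 gS.
- exact: gate_no_complete_cutset gS.
Qed.
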